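(* A function $\phi:\mathbb{F}_2^n\to\mathbb{C}$ satisfies $\|\phi\|_2=\|\phi\|_{U^3}=1$ (i.e. $\phi$ is a stabilizer state) if and only if there exists a Lagrangian subspace $L\le\mathbb{F}_2^{2n}$ such that for all $a,b\in\mathbb{F}_2^n$, $$\big|\widehat{\Delta_a\phi}(b)\big|=\begin{cases}1 & \text{if }(a,b)\in L,\\ 0&\text{if }(a,b)\notin L.\end{cases}$$
   Context: For $g:\mathbb{F}_2^n\to\mathbb{C}$: $\|g\|_2=(\mathbb{E}_{x\in\mathbb{F}_2^n}|g(x)|^2)^{1/2}$; $\Delta_a g(x)=g(x+a)\overline{g(x)}$; $\hat g(b)=\mathbb{E}_{x\in\mathbb{F}_2^n}g(x)(-1)^{b\cdot x}$; $\|g\|_{U^3}=\big(\mathbb{E}_{x,a,b,c}\Delta_a\Delta_b\Delta_c g(x)\big)^{1/8}$. The standard symplectic form on $\mathbb{F}_2^{2n}=\mathbb{F}_2^n\times\mathbb{F}_2^n$ is $[(a,b),(c,d)]=a\cdot d-b\cdot c$. A subspace $U$ is isotropic if $[u,v]=0$ for all $u,v\in U$; a Lagrangian subspace is a maximal isotropic subspace (equivalently an isotropic subspace of dimension $n$). *)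

From HB Require Import structures.
From mathcomp Require Import all_boot all_order all_algebra.
From mathcomp Require Import complex.
From mathcomp Require Import reals.
Set Implicit Arguments. Unset Strict Implicit. Unset Printing Implicit Defensive.
Import Order.TTheory GRing.Theory Num.Theory.
Local Open Scope ring_scope.

Notation F2n n := 'rV['F_2]_n.

Section Defs.
Variable (R : realType).
Notation C := (R[i]).
Variable n : nat.

Definition dot (x y : F2n n) : 'F_2 := (x *m y^T) 0 0.

Definition avg (f : F2n n -> C) : C := (#|{: F2n n}|%:R)^-1 * \sum_x f x.

Definition norm2 (g : F2n n -> C) : C := sqrtC (avg (fun x => `|g x| ^+ 2)).

Definition Delta (a : F2n n) (g : F2n n -> C) : F2n n -> C :=
  fun x => g (x + a) * (g x)^*.

Definition fourier (g : F2n n -> C) (b : F2n n) : C :=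
  avg (fun x => g x * (-1) ^+ (nat_of_ord (dot b x))).

Definition U3norm (g : F2n n -> C) : C :=
  8.-root (avg (fun x => avg (fun a => avg (fun b => avg (fun c =>
    Delta a (Delta b (Delta c g)) x))))).

(* F_2^{2n} = F_2^n x F_2^n, standard symplectic form *)
Definition sympl (u v : F2n n * F2n n) : 'F_2 :=
  dot u.1 v.2 - dot u.2 v.1.

Definition isotropic (U : {vspace (F2n n * F2n n)}) : Prop :=
  forall u v, u \in U -> v \in U -> sympl u v = 0.

Definition lagrangian (L : {vspace (F2n n * F2n n)}) : Prop :=
  isotropic L /\ forall M : {vspace (F2n n * F2n n)}, isotropic M -> (L <= M)%VS -> M = L.

End Defs.

From HB Require Import structures.
From mathcomp Require Import all_boot all_order all_algebra.
From mathcomp Require Import complex reals ring.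
Set Implicit Arguments. Unset Strict Implicit. Unset Printing Implicit Defensive.
Import Order.TTheory GRing.Theory Num.Theory.
Local Open Scope ring_scope.

(* Write W(a, b) for the Fourier coefficient of Delta_a phi at b; it is the
   inner product of phi with its image under the Weyl operator
   phi |-> phi(. + a) (-1)^(b.x).  By Parseval, E_a sum_b |W|^2 = ||phi||_2^4,
   and applied once more, E_a sum_b |W|^4 = ||phi||_U3^8.  If ||phi||_2 = 1
   then |W| <= 1, with equality exactly when phi is an eigenvector of that
   Weyl operator, so ||phi||_U3 = 1 forces |W| to take only the values 0 and
   1, on a set S of size 2^n.  Eigenvectors of two Weyl operators are
   eigenvectors of their product, so S is closed under addition, and the two
   operators then commute, so S is isotropic.  By a character sum an isotropic
   M satisfies |M| |M^perp| = 4^n with M <= M^perp, hence |M| <= 2^n and S is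
   Lagrangian.  Conversely, if |W| is the indicator of a subspace L then
   W(0, 0) = ||phi||_2^2 = 1, the first identity gives |L| = 2^n, and the
   second then gives ||phi||_U3 = 1. *)

Lemma F2_0or1 (k : 'F_2) : k = 0 \/ k = 1.
Proof. by case: k => [[|[|]]] //= ?; [left | right]; apply/val_inj. Qed.

Lemma oppv_F2 (W : lmodType 'F_2) (w : W) : - w = w.
Proof. by rewrite -scaleN1r (_ : -1 = 1) ?scale1r //; apply/val_inj. Qed.

Lemma addvv_F2 (W : lmodType 'F_2) (w : W) : w + w = 0.
Proof. by rewrite -{2}(oppv_F2 w) subrr. Qed.

Definition sign2 {R : pzRingType} (k : 'F_2) : R := (-1) ^+ k.

Lemma sign2_0 (R : pzRingType) : sign2 0 = 1 :> R.
Proof. by []. Qed.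

Lemma sign2_1 (R : pzRingType) : sign2 1 = -1 :> R.
Proof. exact: expr1. Qed.

Lemma sign2D (R : pzRingType) (k l : 'F_2) :
  sign2 (k + l) = sign2 k * sign2 l :> R.
Proof.
by case: (F2_0or1 k) (F2_0or1 l) => -> [] ->;
  rewrite ?addr0 ?add0r ?sign2_0 ?sign2_1 ?mulr1 ?mul1r ?mulrNN ?mulr1 //
          (_ : 1 + 1 = 0) ?sign2_0 //; apply/val_inj.
Qed.

Lemma sign2_mulss (R : pzRingType) (k : 'F_2) : sign2 k * sign2 k = 1 :> R.
Proof. by case: (F2_0or1 k) => ->; rewrite ?sign2_0 ?sign2_1 ?mulr1 ?mulrNN ?mulr1. Qed.

Lemma norm_sign2 (R : numDomainType) (k : 'F_2) : `|sign2 k : R| = 1.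
Proof. by rewrite normrX normrN1 expr1n. Qed.

Lemma conj_sign2 (C : numClosedFieldType) (k : 'F_2) : (sign2 k : C)^* = sign2 k.
Proof. by rewrite rmorphXn rmorphN1. Qed.

Lemma sign2_inj (R : numDomainType) : injective (sign2 : 'F_2 -> R).
Proof.
have s1N1 : sign2 1 != sign2 0 :> R.
  by rewrite sign2_1 sign2_0 -subr_eq0 -opprD oppr_eq0 -mulr2n pnatr_eq0.
by move=> k l; case: (F2_0or1 k) (F2_0or1 l) => -> [] -> // /eqP;
  rewrite ?(negbTE s1N1) // eq_sym (negbTE s1N1).
Qed.

Section AdditiveCharacterSums.
Variable G : finZmodType.

Lemma sum_sign2_additive (R : numDomainType) (H : {set G}) (chi : G -> 'F_2) :
  {morph chi : x y / x + y} -> {in H &, forall x y, x - y \in H} ->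
  \sum_(h in H) (sign2 (chi h) : R) =
    if [forall h in H, chi h == 0] then #|H|%:R else 0.
Proof.
move=> chiD subH; case: ifP => [/forall_inP chi0 | /negbT].
  by rewrite -sum1_card natr_sum; apply: eq_bigr => h /chi0/eqP ->.
rewrite negb_forall_in => /exists_inP [h0 h0H chi_h0].
have addH h : (h + h0 \in H) = (h \in H).
  have NhH : - h0 \in H by rewrite -sub0r subH // -(subrr h0) subH.
  apply/idP/idP => [|hH]; last by rewrite -[h0]opprK subH.
  by move/subH/(_ h0H); rewrite addrK.
set S := \sum_(h in H) _.
(* Translating by h0, where chi h0 = 1, flips every sign. *)
have SN : S = - S.
  rewrite {1}/S (reindex_inj (addIr h0)) /= (eq_bigl _ _ addH) -sumrN.
  apply: eq_bigr => h _; case: (F2_0or1 (chi h0)) chi_h0 => [-> //|chi1 _].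
  by rewrite chiD sign2D chi1 sign2_1 mulrN1.
have : S *+ 2 = 0 by rewrite mulr2n {1}SN addNr.
by move/eqP; rewrite mulrn_eq0 => /eqP.
Qed.

Variable form : G -> G -> 'F_2.
Hypothesis formDl : forall y, {morph form^~ y : x x' / x + x'}.
Hypothesis formDr : forall x, {morph form x : y y' / y + y'}.
Hypothesis form_nondeg : forall x, (forall y, form x y = 0) -> x = 0.

Lemma form0l y : form 0 y = 0.
Proof. by apply: (addrI (form 0 y)); rewrite -formDl !addr0. Qed.

Lemma sum_sign2_form (R : numDomainType) x :
  \sum_y (sign2 (form x y) : R) = if x == 0 then #|G|%:R else 0.
Proof.
have := sum_sign2_additive R (formDr x) (fun y z _ _ => in_setT (y - z)).
rewrite cardsT (eq_bigl _ _ (@in_setT G)) => ->.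
congr (if _ then _ else _); apply/forall_inP/eqP => [form_x0 | -> y _].
  by apply: form_nondeg => y; apply/eqP/form_x0/in_setT.
by rewrite form0l.
Qed.

Definition orth (M : {set G}) : {set G} := [set y | [forall m in M, form m y == 0]].

Lemma card_orth (M : {set G}) : 0 \in M -> {in M &, forall x y, x - y \in M} ->
  (#|M| * #|orth M|)%N = #|G|.
Proof.
move=> M0 subM; apply/eqP; rewrite -(eqr_nat int).
pose S := \sum_y \sum_(m in M) (sign2 (form m y) : int).
have -> : ((#|M| * #|orth M|)%:R = S).
  rewrite /S -(eq_bigr _ (fun y _ => esym (sum_sign2_additive int (formDl y) subM))).
  rewrite (eq_bigr (fun y => if y \in orth M then #|M|%:R else 0)) => [|y _]; last by rewrite inE.
  by rewrite -big_mkcond sumr_const natrM mulr_natr.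
rewrite /S exchange_big (eq_bigr _ (fun m _ => sum_sign2_form int m)) /=.
rewrite (bigD1 0) //= eqxx big1 ?addr0 // => m /andP[_].
by move/negbTE ->.
Qed.

Lemma card_isotropic (M : {set G}) : 0 \in M -> {in M &, forall x y, x - y \in M} ->
  {in M &, forall x y, form x y = 0} -> (#|M| ^ 2 <= #|G|)%N.
Proof.
move=> M0 subM isoM; rewrite -mulnn -(card_orth M0 subM) leq_mul2l.
apply/orP; right; apply/subset_leq_card/subsetP => y yM.
by rewrite inE; apply/forall_inP => m mM; rewrite isoM.
Qed.

End AdditiveCharacterSums.

Lemma span_sub_addr_closed (W : vectType 'F_2) (S : {pred W}) (X : seq W) :
  0 \in S -> {in S &, forall u v, u + v \in S} -> {subset X <= S} ->
  {subset <<X>>%VS <= S}.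
Proof.
move=> S0 SD; elim: X => [_ u|x X IHX XS u].
  by rewrite span_nil memv0 => /eqP ->.
rewrite span_cons => /memv_addP[_ /vlineP[k ->] [y yX ->]].
apply: SD; last by apply: IHX yX => z zX; apply: XS; rewrite inE zX orbT.
by case: (F2_0or1 k) => ->; rewrite ?scale0r ?scale1r //; apply: XS; exact: mem_head.
Qed.

(* HB does not infer this join for products on its own. *)
HB.instance Definition _ (U W : finZmodType) := GRing.Zmodule.on (U * W)%type.

Section SymplecticSpace.
Variable n : nat.
Local Notation V := (F2n n).
Local Notation VV := (V * V)%type.

Lemma dotC (x y : V) : dot x y = dot y x.
Proof. by rewrite /dot !mxE; apply: eq_bigr => j _; rewrite !mxE mulrC. Qed.

Lemma dotDl (y x x' : V) : dot (x + x') y = dot x y + dot x' y.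
Proof. by rewrite /dot mulmxDl mxE. Qed.

Lemma dotDr (x y y' : V) : dot x (y + y') = dot x y + dot x y'.
Proof. by rewrite dotC dotDl !(dotC x). Qed.

Lemma dot0l (y : V) : dot 0 y = 0.
Proof. by rewrite /dot mul0mx mxE. Qed.

Lemma dot_deltal (x : V) i : dot (delta_mx 0 i) x = x 0 i.
Proof.
rewrite /dot mxE (bigD1 i) //= big1 ?addr0 => [|j ji]; first by rewrite !mxE !eqxx mul1r.
by rewrite !mxE (negbTE ji) andbF mul0r.
Qed.

Lemma dot_nondeg (x : V) : (forall y, dot x y = 0) -> x = 0.
Proof.
move=> x0; apply/matrixP => i j; rewrite (ord1 i) mxE.
by rewrite -dot_deltal dotC x0.
Qed.

Lemma symplDl (v : VV) : {morph (@sympl n)^~ v : u u' / u + u'}.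
Proof. by move=> u u'; rewrite /sympl !dotDl; ring. Qed.

Lemma symplDr (u : VV) : {morph @sympl n u : v v' / v + v'}.
Proof. by move=> v v'; rewrite /sympl !dotDr; ring. Qed.

Lemma sympl_nondeg (u : VV) : (forall v, sympl u v = 0) -> u = 0.
Proof.
case: u => x y u0; congr (_, _); apply: dot_nondeg => z.
  by have := u0 (0, z); rewrite /sympl /= (dotC y) dot0l subr0.
by have := u0 (z, 0); rewrite /sympl /= (dotC x) dot0l sub0r => /eqP; rewrite oppr_eq0 => /eqP.
Qed.

Lemma card_isotropic_vspace (M : {vspace VV}) :
  isotropic M -> (#|[set u | u \in M]| <= #|V|)%N.
Proof.
move=> isoM; rewrite -leq_sqr -[(#|V| ^ 2)%N]mulnn -card_prod.
apply: (card_isotropic (@symplDl) (@symplDr) (@sympl_nondeg)) => [|u v|u v];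
  rewrite !inE; [exact: mem0v | exact: memvB | exact: isoM].
Qed.

Lemma lagrangian_of_card (L : {vspace VV}) :
  isotropic L -> #|[set u | u \in L]| = #|V| -> lagrangian L.
Proof.
move=> isoL cardL; split=> // M isoM LM; apply/eqP; rewrite eqEsubv LM andbT.
have sub_LM : [set u | u \in L] \subset [set u | u \in M].
  by apply/subsetP => u; rewrite !inE => /(subvP LM).
have card_eq : #|[set u | u \in L]| == #|[set u | u \in M]|.
  by rewrite eqn_leq subset_leq_card // cardL card_isotropic_vspace.
have eqLM := subset_cardP (eqP card_eq) sub_LM.
by apply/subvP => u; rewrite -[u \in M]in_set -eqLM inE.
Qed.

End SymplecticSpace.

Section Fourier.
Variables (R : realType) (n : nat).
Local Notation C := R[i].
Local Notation V := (F2n n).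
Local Notation N := (#|{: V}|%:R : C).

Lemma natr_card_neq0 : N != 0.
Proof. by rewrite pnatr_eq0 -lt0n; apply/card_gt0P; exists 0. Qed.

Lemma sum_addr (f : V -> C) a : \sum_x f (x + a) = \sum_x f x.
Proof. by rewrite [RHS](reindex_inj (addIr a)). Qed.

Lemma eq_avg (f g : V -> C) : f =1 g -> avg f = avg g.
Proof. by move=> fg; rewrite /avg (eq_bigr _ (fun x _ => fg x)). Qed.

Lemma avg_ge0 (f : V -> C) : (forall x, 0 <= f x) -> 0 <= avg f.
Proof. by move=> f_ge0; rewrite mulr_ge0 ?invr_ge0 ?ler0n ?sumr_ge0. Qed.

Lemma avg_exchange (F : V -> V -> C) :
  avg (fun x => avg (F x)) = avg (fun y => avg (F^~ y)).
Proof. by rewrite /avg -!mulr_sumr exchange_big. Qed.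

Lemma avg_addr (f : V -> C) a : avg (fun x => f (x + a)) = avg f.
Proof. by rewrite /avg sum_addr. Qed.

Lemma avgMr (f : V -> C) c : avg (fun x => f x * c) = avg f * c.
Proof. by rewrite /avg -mulr_suml mulrA. Qed.

Lemma avgD (f g : V -> C) : avg (fun x => f x + g x) = avg f + avg g.
Proof. by rewrite /avg big_split mulrDr. Qed.

Lemma avgB (f g : V -> C) : avg (fun x => f x - g x) = avg f - avg g.
Proof. by rewrite /avg sumrB mulrBr. Qed.

Lemma avgZ (f : V -> C) c : avg (fun x => c * f x) = c * avg f.
Proof. by rewrite /avg -mulr_sumr mulrCA. Qed.

Lemma conj_avg (f : V -> C) : (avg f)^* = avg (fun x => (f x)^*).
Proof. by rewrite /avg rmorphM rmorph_sum /= fmorphV rmorph_nat. Qed.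

Lemma avg_eq0P (f : V -> C) : (forall x, 0 <= f x) -> avg f = 0 -> f =1 (fun=> 0).
Proof.
move=> f_ge0 /eqP; rewrite mulf_eq0 invr_eq0 (negbTE natr_card_neq0) => /eqP f0 x.
exact: (psumr_eq0P (fun y _ => f_ge0 y) f0).
Qed.

Lemma sum_sign2_dot (x : V) : \sum_b (sign2 (dot b x) : C) = if x == 0 then N else 0.
Proof.
under eq_bigr do rewrite dotC.
exact: (sum_sign2_form (@dotDl n) (@dotDr n) (@dot_nondeg n)).
Qed.

Lemma fourierE (g : V -> C) b : fourier g b = avg (fun x => g x * sign2 (dot b x)).
Proof. by []. Qed.

Lemma sqr_norm_fourier (g : V -> C) b : `|fourier g b| ^+ 2 =
  N^-1 * N^-1 * \sum_x \sum_y g x * (g y)^* * sign2 (dot b (x + y)).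
Proof.
rewrite normCK fourierE /avg rmorphM rmorph_sum /= fmorphV rmorph_nat mulrACA mulr_suml.
congr (_ * _); apply: eq_bigr => x _; rewrite mulr_sumr; apply: eq_bigr => y _.
by rewrite rmorphM /= conj_sign2 dotDr sign2D; ring.
Qed.

Lemma parseval (g : V -> C) :
  \sum_b `|fourier g b| ^+ 2 = avg (fun x => `|g x| ^+ 2).
Proof.
under eq_bigr do rewrite sqr_norm_fourier.
rewrite -mulr_sumr exchange_big /=.
under eq_bigr do rewrite exchange_big /=.
have diag x : \sum_y \sum_b g x * (g y)^* * sign2 (dot b (x + y)) = `|g x| ^+ 2 * N.
  rewrite (eq_bigr (fun y => if y == x then `|g x| ^+ 2 * N else 0)).
    by rewrite -big_mkcond big_pred1_eq.
  move=> y _; rewrite -mulr_sumr sum_sign2_dot addr_eq0 oppv_F2 (eq_sym x).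
  by case: eqP => [->|]; rewrite ?normCK ?mulr0.
rewrite (eq_bigr _ (fun x _ => diag x)) -mulr_suml /avg.
by field; exact: natr_card_neq0.
Qed.

Definition autocorr (g : V -> C) (b : V) : C := avg (Delta b g).

Lemma fourier_autocorr (g : V -> C) xi : fourier (autocorr g) xi = `|fourier g xi| ^+ 2.
Proof.
rewrite sqr_norm_fourier fourierE /autocorr /avg.
under eq_bigr do rewrite -mulrA mulr_suml.
rewrite -mulr_sumr mulrA exchange_big /=; congr (_ * _); rewrite [RHS]exchange_big /=.
apply: eq_bigr => x _; rewrite -(sum_addr _ x); apply: eq_bigr => y _.
by rewrite /Delta [x + (y + x)]addrC -addrA addvv_F2 addr0 (addrC y x); ring.
Qed.

Lemma avg_DeltaDelta (g : V -> C) b :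
  avg (fun x => avg (fun c => Delta b (Delta c g) x)) = `|autocorr g b| ^+ 2.
Proof.
rewrite normCK /autocorr /avg -mulr_sumr mulrA rmorphM rmorph_sum /= fmorphV rmorph_nat.
rewrite mulrACA mulr_suml; congr (_ * _).
(* Substitute x + b for x, and x + c for the second summation variable. *)
rewrite -(sum_addr _ b); apply: eq_bigr => x _.
rewrite mulr_sumr -[in RHS](sum_addr _ x); apply: eq_bigr => c _.
rewrite /Delta !rmorphM /= !conjCK -(addrA x b b) addvv_F2 addr0.
by rewrite (addrC c x) (addrAC x c b); ring.
Qed.

Lemma U2_fourier (g : V -> C) :
  avg (fun b => avg (fun x => avg (fun c => Delta b (Delta c g) x))) =
    \sum_xi `|fourier g xi| ^+ 4.
Proof.
rewrite (eq_avg (avg_DeltaDelta g)) -parseval; apply: eq_bigr => xi _.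
by rewrite fourier_autocorr normrX normr_id -exprM.
Qed.

Lemma DeltaC a b (g : V -> C) x : Delta a (Delta b g) x = Delta b (Delta a g) x.
Proof. by rewrite /Delta !rmorphM /= !conjCK (addrAC x a b); ring. Qed.

Lemma eq_Delta a (f g : V -> C) : f =1 g -> Delta a f =1 Delta a g.
Proof. by move=> fg x; rewrite /Delta !fg. Qed.

Definition weyl_coef (phi : V -> C) (a b : V) : C := fourier (Delta a phi) b.

Lemma U3normE (phi : V -> C) :
  U3norm phi = 8.-root (avg (fun a => \sum_b `|weyl_coef phi a b| ^+ 4)).
Proof.
rewrite /U3norm avg_exchange; congr (8.-root _); apply: eq_avg => a.
rewrite -U2_fourier avg_exchange; apply: eq_avg => b; apply: eq_avg => x; apply: eq_avg => c.
by rewrite DeltaC; apply: eq_Delta => y; exact: DeltaC.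
Qed.

Definition sqnorm2 (phi : V -> C) : C := avg (fun x => `|phi x| ^+ 2).

Lemma sum_weyl_coef2 (phi : V -> C) :
  avg (fun a => \sum_b `|weyl_coef phi a b| ^+ 2) = sqnorm2 phi ^+ 2.
Proof.
under eq_avg do rewrite parseval.
rewrite avg_exchange expr2 -avgMr; apply: eq_avg => x.
under eq_avg do rewrite /Delta normrM exprMn norm_conjC (addrC x).
by rewrite avgMr (avg_addr (fun y => `|phi y| ^+ 2)) mulrC.
Qed.

Definition weyl (a b : V) (g : V -> C) (x : V) : C := g (x + a) * sign2 (dot b x).

Lemma weyl_coefE (phi : V -> C) a b :
  weyl_coef phi a b = avg (fun x => weyl a b phi x * (phi x)^*).
Proof. by apply: eq_avg => x; rewrite /Delta /weyl mulrAC. Qed.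

Lemma weylM a b a' b' (g : V -> C) x :
  weyl a b (weyl a' b' g) x = sign2 (dot b' a) * weyl (a + a') (b + b') g x.
Proof. by rewrite /weyl addrA dotDr dotDl !sign2D; ring. Qed.

Lemma weyl_coef00 (phi : V -> C) : weyl_coef phi 0 0 = sqnorm2 phi.
Proof. by apply: eq_avg => x; rewrite /Delta addr0 dot0l mulr1 normCK. Qed.

Lemma sum_indicator (S : {set V * V}) :
  avg (fun a => \sum_b (if (a, b) \in S then 1 else 0)) = #|S|%:R / N.
Proof.
rewrite /avg pair_bigA /=; under eq_bigr do rewrite -surjective_pairing.
by rewrite -big_mkcond sumr_const mulrC.
Qed.

Lemma divr_card_eq1 k : k%:R / N = 1 -> k = #|V|.
Proof.
move/(congr1 ( *%R^~ N)); rewrite mulfVK ?natr_card_neq0 // mul1r.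
by move/eqP; rewrite eqr_nat => /eqP.
Qed.

Lemma norm2_eq1 (phi : V -> C) : (norm2 phi == 1) = (sqnorm2 phi == 1).
Proof. exact: rootC_eq1. Qed.

Lemma U3norm_eq1 (phi : V -> C) :
  (U3norm phi == 1) = (avg (fun a => \sum_b `|weyl_coef phi a b| ^+ 4) == 1).
Proof. by rewrite U3normE rootC_eq1. Qed.

Section UnitState.
Variable phi : V -> C.
Hypothesis phi_unit : sqnorm2 phi = 1.
Local Notation W := (weyl_coef phi).

Lemma avg_sqr_weyl_residual a b :
  avg (fun x => `|weyl a b phi x - W a b * phi x| ^+ 2) = 1 - `|W a b| ^+ 2.
Proof.
set u := weyl a b phi; set w := W a b.
have expand x : `|u x - w * phi x| ^+ 2 = `|u x| ^+ 2 - w * (phi x * (u x)^*)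
    - w^* * (u x * (phi x)^*) + w * w^* * `|phi x| ^+ 2.
  by rewrite !normCK rmorphB (rmorphM _ w) /=; ring.
have u_unit : avg (fun x => `|u x| ^+ 2) = 1.
  under eq_avg do rewrite /u /weyl normrM norm_sign2 mulr1.
  by rewrite (avg_addr (fun x => `|phi x| ^+ 2)).
have uw : avg (fun x => phi x * (u x)^*) = w^*.
  rewrite /w weyl_coefE conj_avg; apply: eq_avg => x.
  by rewrite (rmorphM _ (weyl a b phi x)) /= conjCK mulrC.
rewrite (eq_avg expand) avgD !avgB !avgZ u_unit uw -weyl_coefE.
by rewrite -/w [avg _]phi_unit normCK; ring.
Qed.

Lemma norm_weyl_coef_le1 a b : `|W a b| <= 1.
Proof.
rewrite -(expr_le1 (n := 2)) // -subr_ge0 -avg_sqr_weyl_residual.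
by apply: avg_ge0 => x; apply: exprn_ge0.
Qed.

Lemma weyl_eigen a b : `|W a b| = 1 -> weyl a b phi =1 (fun x => W a b * phi x).
Proof.
move=> W1 x; apply/eqP; rewrite -subr_eq0 -normr_eq0 -sqrf_eq0.
apply/eqP; move: x; apply: avg_eq0P => [x|]; first exact: exprn_ge0.
by rewrite avg_sqr_weyl_residual W1 expr1n subrr.
Qed.

Lemma weyl_coef_eigen a b w :
  weyl a b phi =1 (fun x => w * phi x) -> W a b = w.
Proof.
move=> eig; rewrite weyl_coefE -[RHS]mulr1 -phi_unit -avgZ.
by apply: eq_avg => x; rewrite eig normCK mulrA.
Qed.

Lemma weyl_eigenD a b a' b' w w' :
  weyl a b phi =1 (fun x => w * phi x) -> weyl a' b' phi =1 (fun x => w' * phi x) ->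
  weyl (a + a') (b + b') phi =1 (fun x => sign2 (dot b' a) * w * w' * phi x).
Proof.
move=> eig eig' x; have := weylM a b a' b' phi x.
rewrite {1}/weyl eig' -mulrA -/(weyl a b phi x) eig => comp.
by rewrite -[LHS]mul1r -(sign2_mulss _ (dot b' a)) -[LHS]mulrA -comp; ring.
Qed.

Lemma exists_nonzero : exists x, phi x != 0.
Proof.
case: (pickP (fun x => phi x != 0)) => [x phi_x | phi0]; first by exists x.
have : sqnorm2 phi = 0.
  by rewrite /sqnorm2 /avg big1 ?mulr0 // => x _; rewrite (eqP (negbFE (phi0 x))) normr0 expr0n.
by rewrite phi_unit => /eqP; rewrite oner_eq0.
Qed.

Definition weyl_support : {set V * V} := [set u | `|W u.1 u.2| == 1].

Lemma weyl_support_eigen u :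
  u \in weyl_support -> weyl u.1 u.2 phi =1 (fun x => W u.1 u.2 * phi x).
Proof. by rewrite inE => /eqP; exact: weyl_eigen. Qed.

Lemma weyl_supportD u v :
  u \in weyl_support -> v \in weyl_support -> u + v \in weyl_support.
Proof.
move=> uS vS; have eig := weyl_eigenD (weyl_support_eigen uS) (weyl_support_eigen vS).
move: uS vS; rewrite !inE /= (weyl_coef_eigen eig) !normrM norm_sign2 => /eqP -> /eqP ->.
by rewrite !mul1r.
Qed.

Lemma weyl_support_isotropic u v :
  u \in weyl_support -> v \in weyl_support -> sympl u v = 0.
Proof.
move=> uS vS; have [x phi_x] := exists_nonzero.
have eig_uv := weyl_eigenD (weyl_support_eigen uS) (weyl_support_eigen vS) x.
have eig_vu := weyl_eigenD (weyl_support_eigen vS) (weyl_support_eigen uS) x.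
rewrite [v.1 + _]addrC [v.2 + _]addrC eig_uv in eig_vu.
have W_neq0 w : w \in weyl_support -> W w.1 w.2 != 0.
  by rewrite inE -normr_eq0 => /eqP ->; rewrite oner_eq0.
(* Both orders of composition give the eigenvalue of the Weyl operator at u + v. *)
have : sign2 (dot v.2 u.1) = sign2 (dot u.2 v.1) :> C.
  apply: (mulIf phi_x); apply: (mulIf (W_neq0 _ vS)); apply: (mulIf (W_neq0 _ uS)).
  by transitivity (sign2 (dot v.2 u.1) * W u.1 u.2 * W v.1 v.2 * phi x);
    [ring | rewrite eig_vu; ring].
by move/sign2_inj; rewrite /sympl (dotC u.1) => ->; rewrite subrr.
Qed.

Hypothesis phi_U3 : avg (fun a => \sum_b `|W a b| ^+ 4) = 1.

Lemma norm_weyl_coef_indicator a b :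
  `|W a b| = if (a, b) \in weyl_support then 1 else 0.
Proof.
(* The terms |W|^2 - |W|^4 are nonnegative and average to 1 - 1 = 0. *)
have factor (t : C) : t ^+ 2 - t ^+ 4 = t ^+ 2 * (1 - t ^+ 2) by ring.
have ge0 a' b' : 0 <= `|W a' b'| ^+ 2 - `|W a' b'| ^+ 4.
  by rewrite factor mulr_ge0 ?exprn_ge0 // subr_ge0 exprn_ile1 ?norm_weyl_coef_le1.
have sum0 : avg (fun a' => \sum_b' (`|W a' b'| ^+ 2 - `|W a' b'| ^+ 4)) = 0.
  by under eq_avg do rewrite sumrB; rewrite avgB sum_weyl_coef2 phi_unit phi_U3 expr1n subrr.
have := avg_eq0P (fun a' => sumr_ge0 _ (fun b' _ => ge0 a' b')) sum0 a.
move/(psumr_eq0P (fun b' _ => ge0 a b'))/(_ b isT)/eqP.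
rewrite factor mulf_eq0 sqrf_eq0 normr_eq0 subr_eq0 (eq_sym 1) sqrp_eq1 // inE /=.
by case/orP => [/eqP -> | W1]; rewrite ?normr0 ?(eq_sym 0) ?oner_eq0 ?W1 ?(eqP W1).
Qed.

Lemma card_weyl_support : #|weyl_support| = #|V|.
Proof.
apply: divr_card_eq1; rewrite -sum_indicator -phi_U3; apply: eq_avg => a.
by apply: eq_bigr => b _; rewrite norm_weyl_coef_indicator; case: ifP; rewrite ?expr1n ?expr0n.
Qed.

End UnitState.

Lemma stabilizer_lagrangian (phi : V -> C) :
  sqnorm2 phi = 1 -> avg (fun a => \sum_b `|weyl_coef phi a b| ^+ 4) = 1 ->
  exists L : {vspace V * V}, lagrangian L /\
    forall a b, `|weyl_coef phi a b| = if (a, b) \in L then 1 else 0.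
Proof.
move=> phi_unit phi_U3; set S := weyl_support phi.
have S0 : (0 : V * V) \in S by rewrite inE /= weyl_coef00 phi_unit normr1.
set L := <<enum S>>%VS.
have memL u : (u \in L) = (u \in S).
  apply/idP/idP => [|uS]; last by apply: memv_span; rewrite mem_enum.
  apply: span_sub_addr_closed S0 _ _ u => [v w|v]; last by rewrite mem_enum.
  exact: weyl_supportD.
exists L; split => [|a b]; last by rewrite memL norm_weyl_coef_indicator.
apply: lagrangian_of_card => [u v|]; first by rewrite !memL; exact: weyl_support_isotropic.
by rewrite -(card_weyl_support phi_unit phi_U3); apply: eq_card => u; rewrite inE memL.
Qed.

Lemma norms_of_weyl_indicator (phi : V -> C) (L : {vspace V * V}) :
  (forall a b, `|weyl_coef phi a b| = if (a, b) \in L then 1 else 0) ->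
  sqnorm2 phi = 1 /\ avg (fun a => \sum_b `|weyl_coef phi a b| ^+ 4) = 1.
Proof.
move=> WL; set indL := fun a b => if (a, b) \in [set u | u \in L] then 1 else 0 : C.
have WLk k a b : `|weyl_coef phi a b| ^+ k.+1 = indL a b.
  by rewrite WL /indL inE; case: ifP; rewrite ?expr1n ?expr0n.
have phi_unit : sqnorm2 phi = 1.
  have := WL 0 0; rewrite (_ : (0, 0) \in L) ?mem0v // weyl_coef00 => <-.
  by rewrite ger0_norm //; apply: avg_ge0 => x; apply: exprn_ge0.
have cardL : #|[set u | u \in L]| = #|V|.
  apply: divr_card_eq1; rewrite -sum_indicator.
  transitivity (sqnorm2 phi ^+ 2); last by rewrite phi_unit expr1n.
  by rewrite -sum_weyl_coef2; apply: eq_avg => a; apply: eq_bigr => b _; rewrite WLk.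
split=> //; under eq_avg do under eq_bigr do rewrite WLk.
by rewrite sum_indicator cardL divff ?natr_card_neq0.
Qed.

End Fourier.

Theorem proposition2p4 (R : realType) (n : nat) (phi : 'rV['F_2]_n -> R[i]) :
  (norm2 phi = 1 /\ U3norm phi = 1) <->
  exists L : {vspace ('rV['F_2]_n * 'rV['F_2]_n)}, lagrangian L /\
    forall a b : 'rV['F_2]_n,
      `|fourier (Delta a phi) b| = (if (a, b) \in L then 1 else 0).
Proof.
split=> [[/eqP n2 /eqP u3] | [L [_ WL]]].
  by apply: stabilizer_lagrangian; apply/eqP; rewrite -?norm2_eq1 -?U3norm_eq1.
have [phi_unit phi_U3] := norms_of_weyl_indicator WL.
by split; apply/eqP; rewrite ?norm2_eq1 ?U3norm_eq1 ?phi_unit ?phi_U3.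
Qed.
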